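(* Let $L, L_{xy},\mu_y, t, r>0$ with $\mu_y\leq L$. Then there exist $n,m$, a function $F\in\mathcal{F}(L, L, L_{xy}, 0, \mu_y)$ on $\mathbb{R}^n\times\mathbb{R}^m$ with a unique saddle point $(x^\star, y^\star)$, and a point $(x^1, y^1)$ with $\|x^1-x^\star\|^2+\|y^1-y^\star\|^2=r^2$, such that the point $x^{2}=x^1-t\nabla_x F(x^1, y^1)$, $y^{2}=y^1+t\nabla_y F(x^1, y^1)$ satisfies $$ \|x^2-x^\star\|^2+\|y^2-y^\star\|^2\geq \alpha\left(\|x^1-x^\star\|^2+\|y^1-y^\star\|^2\right) $$ for some $\alpha\geq 1$.
   Context: $\mathcal{F}(L_x, L_y, L_{xy}, \mu_x, \mu_y)$ (with $\mu_x,\mu_y\ge 0$) denotes the set of differentiable $F:\mathbb{R}^n\times\mathbb{R}^m\to\mathbb{R}$ such that for all $x,x_1,x_2,y,y_1,y_2$: $\|\nabla_x F(x_2, y)-\nabla_x F(x_1, y)\|\leq L_x\|x_2-x_1\|$; $\|\nabla_y F(x, y_2)-\nabla_y F(x, y_1)\|\leq L_y\|y_2-y_1\|$; $\|\nabla_x F(x, y_2)-\nabla_x F(x, y_1)\|\leq L_{xy}\|y_2-y_1\|$; $\|\nabla_y F(x_2, y)-\nabla_y F(x_1, y)\|\leq L_{xy}\|x_2-x_1\|$; $F(\cdot, y)-\tfrac{\mu_x}{2}\|\cdot\|^2$ convex for every $y$ and $F(x,\cdot)+\tfrac{\mu_y}{2}\|\cdot\|^2$ concave for every $x$ (so $\mu_x=0$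 means merely convex in $x$). A saddle point is $(x^\star,y^\star)$ with $F(x^\star, y)\leq F(x^\star, y^\star)\leq F(x, y^\star)$ for all $x,y$. *)

From HB Require Import structures.
From mathcomp Require Import all_boot all_order all_algebra.
From mathcomp Require Import all_classical all_reals all_analysis.
Set Implicit Arguments. Unset Strict Implicit. Unset Printing Implicit Defensive.
Import Order.TTheory GRing.Theory Num.Theory.
Import numFieldNormedType.Exports.
Local Open Scope ring_scope.

Section Defs.
Variable R : realType.

Definition dotv (n : nat) (u v : 'rV[R]_n) : R := \sum_(i < n) u 0 i * v 0 i.
Definition sqnorm (n : nat) (u : 'rV[R]_n) : R := dotv u u.
Definition enorm (n : nat) (u : 'rV[R]_n) : R := Num.sqrt (sqnorm u).

Definition uncurryF (n m : nat) (F : 'rV[R]_n -> 'rV[R]_m -> R)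
  (z : 'rV[R]_n * 'rV[R]_m) : R := F z.1 z.2.

Definition gradx (n m : nat) (F : 'rV[R]_n -> 'rV[R]_m -> R)
  (x : 'rV[R]_n) (y : 'rV[R]_m) : 'rV[R]_n :=
  \row_(i < n) ('d (uncurryF F) (x, y) (delta_mx 0 i, 0)).
Definition grady (n m : nat) (F : 'rV[R]_n -> 'rV[R]_m -> R)
  (x : 'rV[R]_n) (y : 'rV[R]_m) : 'rV[R]_m :=
  \row_(j < m) ('d (uncurryF F) (x, y) (0, delta_mx 0 j)).

Definition convex_fun (n : nat) (f : 'rV[R]_n -> R) : Prop :=
  forall (u v : 'rV[R]_n) (s : R), 0 <= s -> s <= 1 ->
    f (s *: u + (1 - s) *: v) <= s * f u + (1 - s) * f v.
Definition concave_fun (n : nat) (f : 'rV[R]_n -> R) : Prop :=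
  convex_fun (fun u => - f u).

Definition in_class (n m : nat) (Lx Ly Lxy mux muy : R)
  (F : 'rV[R]_n -> 'rV[R]_m -> R) : Prop :=
  (forall z, differentiable (uncurryF F) z) /\
  (forall x1 x2 y, enorm (gradx F x2 y - gradx F x1 y) <= Lx * enorm (x2 - x1)) /\
  (forall x y1 y2, enorm (grady F x y2 - grady F x y1) <= Ly * enorm (y2 - y1)) /\
  (forall x y1 y2, enorm (gradx F x y2 - gradx F x y1) <= Lxy * enorm (y2 - y1)) /\
  (forall x1 x2 y, enorm (grady F x2 y - grady F x1 y) <= Lxy * enorm (x2 - x1)) /\
  (forall y, convex_fun (fun x => F x y - mux / 2 * sqnorm x)) /\
  (forall x, concave_fun (fun y => F x y + muy / 2 * sqnorm y)).

Definition is_saddle (n m : nat) (F : 'rV[R]_n -> 'rV[R]_m -> R)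
  (xs : 'rV[R]_n) (ys : 'rV[R]_m) : Prop :=
  forall x y, F xs y <= F xs ys /\ F xs ys <= F x ys.

Definition unique_saddle (n m : nat) (F : 'rV[R]_n -> 'rV[R]_m -> R)
  (xs : 'rV[R]_n) (ys : 'rV[R]_m) : Prop :=
  is_saddle F xs ys /\
  forall x' y', is_saddle F x' y' -> x' = xs /\ y' = ys.

End Defs.

From HB Require Import structures.
From mathcomp Require Import all_boot all_order all_algebra.
From mathcomp Require Import all_classical all_reals all_analysis.
From mathcomp Require Import ring lra.
Import Order.TTheory GRing.Theory Num.Theory.
Import numFieldNormedType.Exports.
Local Open Scope ring_scope.

(* Already in dimension one, the bilinear saddle function
   F(x, y) = a x y - mu/2 y^2 has its unique saddle point at the origin, and
   its gradient at (r, 0) is (0, a r).  One simultaneous gradient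
   descent-ascent step from (r, 0) therefore moves to (r, t a r), whose
   squared distance to the saddle point is (1 + (t a)^2) r^2 >= r^2. *)

Lemma sqnorm0 (R : realType) (n : nat) : sqnorm (0 : 'rV[R]_n) = 0.
Proof. by rewrite /sqnorm /dotv big1 // => i _; rewrite mxE mul0r. Qed.

Section OneDimensional.
Variable R : realType.
Implicit Types u v : 'rV[R]_1.

Lemma rV1P u v : u 0 0 = v 0 0 -> u = v.
Proof. by move=> uv; apply/rowP => i; rewrite ord1. Qed.

Lemma sqnorm_rV1 u : sqnorm u = u 0 0 ^+ 2.
Proof. by rewrite /sqnorm /dotv big_ord1 expr2. Qed.

Lemma enorm_rV1 u : enorm u = `|u 0 0|.
Proof. by rewrite /enorm sqnorm_rV1 sqrtr_sqr. Qed.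

End OneDimensional.

Section PlaneCoordinates.
Variable R : realType.
Implicit Types z : 'rV[R]_1 * 'rV[R]_1.

Definition xcoord z : R := z.1 0 0.
Definition ycoord z : R := z.2 0 0.

Lemma xcoord_linear : linear xcoord.
Proof. by move=> a u v; rewrite /xcoord /= !mxE. Qed.

Lemma ycoord_linear : linear ycoord.
Proof. by move=> a u v; rewrite /ycoord /= !mxE. Qed.

HB.instance Definition _ := GRing.isLinear.Build R _ _ _ xcoord xcoord_linear.
HB.instance Definition _ := GRing.isLinear.Build R _ _ _ ycoord ycoord_linear.

Lemma xcoord_continuous : continuous xcoord.
Proof.
move=> z; apply: (continuous_comp (f := fst) (g := fun u : 'rV[R]_1 => u 0 0)).
  exact: cvg_fst.
exact: coord_continuous.
Qed.

Lemma ycoord_continuous : continuous ycoord.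
Proof.
move=> z; apply: (continuous_comp (f := snd) (g := fun u : 'rV[R]_1 => u 0 0)).
  exact: cvg_snd.
exact: coord_continuous.
Qed.

Global Instance is_diff_xcoord z : is_diff z xcoord xcoord.
Proof.
apply: DiffDef; first exact: linear_differentiable xcoord_continuous.
exact: diff_lin xcoord_continuous.
Qed.

Global Instance is_diff_ycoord z : is_diff z ycoord ycoord.
Proof.
apply: DiffDef; first exact: linear_differentiable ycoord_continuous.
exact: diff_lin ycoord_continuous.
Qed.

End PlaneCoordinates.
Arguments xcoord {R}.
Arguments ycoord {R}.

Section BilinearSaddle.
Variables (R : realType) (a mu : R).
Implicit Types x y : 'rV[R]_1.

Definition bilinear_saddle x y : R := a * (x 0 0 * y 0 0) - mu / 2 * (y 0 0 * y 0 0).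

Lemma uncurry_bilinear_saddle :
  uncurryF bilinear_saddle = a *: (xcoord * ycoord) - (mu / 2) *: (ycoord * ycoord).
Proof. by apply/funext. Qed.

Lemma is_diff_bilinear_saddle z : is_diff z (uncurryF bilinear_saddle)
  (a *: (xcoord z *: ycoord + ycoord z *: xcoord)
   - (mu / 2) *: (ycoord z *: ycoord + ycoord z *: ycoord) : _ -> R).
Proof. by rewrite uncurry_bilinear_saddle; apply: is_diffB. Qed.

Lemma gradx_bilinear_saddle x y : gradx bilinear_saddle x y = const_mx (a * y 0 0).
Proof.
apply: rV1P; rewrite !mxE (diff_val (is_diff_def := is_diff_bilinear_saddle (x, y))).
by rewrite /xcoord /ycoord /= !fctE /= !mxE /GRing.scale /=; ring.
Qed.

Lemma grady_bilinear_saddle x y :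
  grady bilinear_saddle x y = const_mx (a * x 0 0 - mu * y 0 0).
Proof.
apply: rV1P; rewrite !mxE (diff_val (is_diff_def := is_diff_bilinear_saddle (x, y))).
by rewrite /xcoord /ycoord /= !fctE /= !mxE /GRing.scale /=; field.
Qed.

Lemma bilinear_saddle_in_class (Lx Ly : R) :
  0 <= Lx -> `|mu| <= Ly -> in_class Lx Ly `|a| 0 mu bilinear_saddle.
Proof.
move=> Lx0 muLy; split.
  by move=> z; rewrite uncurry_bilinear_saddle; apply: ex_diff.
split.
  move=> x1 x2 y; rewrite !gradx_bilinear_saddle subrr !enorm_rV1 mxE normr0.
  by rewrite mulr_ge0.
split.
  move=> x y1 y2; rewrite !grady_bilinear_saddle !enorm_rV1 !mxE.
  have -> : a * x 0 0 - mu * y2 0 0 - (a * x 0 0 - mu * y1 0 0)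
          = - mu * (y2 0 0 - y1 0 0) by ring.
  by rewrite normrM normrN ler_wpM2r.
split.
  by move=> x y1 y2; rewrite !gradx_bilinear_saddle !enorm_rV1 !mxE -mulrBr normrM.
split.
  move=> x1 x2 y; rewrite !grady_bilinear_saddle !enorm_rV1 !mxE.
  have -> : a * x2 0 0 - mu * y 0 0 - (a * x1 0 0 - mu * y 0 0)
          = a * (x2 0 0 - x1 0 0) by ring.
  by rewrite normrM.
split.
  by move=> y u v s _ _; rewrite /bilinear_saddle !sqnorm_rV1 !mxE; lra.
by move=> x u v s _ _; rewrite /bilinear_saddle !sqnorm_rV1 !mxE; lra.
Qed.

Lemma bilinear_saddle_unique : a != 0 -> 0 < mu -> unique_saddle bilinear_saddle 0 0.
Proof.
move=> a0 mu0; split=> [x y | x' y' saddle'].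
  by rewrite /bilinear_saddle !mxE; split; nra.
have sqr_le0 (c : R) : c ^+ 2 <= 0 -> c = 0.
  by move=> c2; apply/eqP; rewrite -sqrf_eq0 eq_le c2 sqr_ge0.
have mulaI (c : R) : a * c = 0 -> c = 0.
  by move/eqP; rewrite mulf_eq0 (negbTE a0) => /eqP.
have y'0 : y' 0 0 = 0.
  have := (saddle' (x' - a *: y') y').2; rewrite /bilinear_saddle !mxE => h.
  by apply/mulaI/sqr_le0; rewrite expr2; nra.
have x'0 : x' 0 0 = 0.
  have := (saddle' x' ((a / mu) *: x')).1; rewrite /bilinear_saddle !mxE y'0.
  (* y = (a / mu) x' maximises F(x', .), with value (a x')^2 / (2 mu) *)
  have -> : a * (x' 0 0 * (a / mu * x' 0 0))
            - mu / 2 * (a / mu * x' 0 0 * (a / mu * x' 0 0))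
          = (a * x' 0 0) ^+ 2 / (2 * mu) by field; rewrite gt_eqF.
  rewrite !(mulr0, mul0r) subr0 ler_pdivrMr ?mulr_gt0 // mul0r.
  by move/sqr_le0/mulaI.
by split; apply: rV1P; rewrite mxE.
Qed.

Lemma bilinear_saddle_gda_step (t : R) (x1 : 'rV[R]_1) :
  sqnorm (x1 - t *: gradx bilinear_saddle x1 0) + sqnorm (t *: grady bilinear_saddle x1 0)
  = (1 + (t * a) ^+ 2) * sqnorm x1.
Proof.
rewrite gradx_bilinear_saddle grady_bilinear_saddle !sqnorm_rV1 !mxE; ring.
Qed.

End BilinearSaddle.
Arguments bilinear_saddle {R}.

Theorem proposition2p5 (R : realType) (L Lxy muy t r : R) :
  0 < L -> 0 < Lxy -> 0 < muy -> 0 < t -> 0 < r -> muy <= L ->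
  exists (n m : nat) (F : 'rV[R]_n -> 'rV[R]_m -> R)
         (xs x1 : 'rV[R]_n) (ys y1 : 'rV[R]_m),
    [/\ in_class L L Lxy 0 muy F,
        unique_saddle F xs ys,
        sqnorm (x1 - xs) + sqnorm (y1 - ys) = r ^+ 2 &
        let x2 := x1 - t *: gradx F x1 y1 in
        let y2 := y1 + t *: grady F x1 y1 in
        exists alpha : R, 1 <= alpha /\
          sqnorm (x2 - xs) + sqnorm (y2 - ys)
            >= alpha * (sqnorm (x1 - xs) + sqnorm (y1 - ys))].
Proof.
move=> L0 Lxy0 muy0 _ _ muyL.
exists 1%N, 1%N, (bilinear_saddle Lxy muy), 0, (const_mx r), 0, 0; split.
- rewrite -[X in in_class _ _ X](gtr0_norm Lxy0).
  by apply: bilinear_saddle_in_class; rewrite ?gtr0_norm // ltW.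
- exact: bilinear_saddle_unique (lt0r_neq0 Lxy0) muy0.
- by rewrite subrr sqnorm0 addr0 subr0 sqnorm_rV1 mxE.
exists (1 + (t * Lxy) ^+ 2); split; first by rewrite lerDl sqr_ge0.
by rewrite !subr0 add0r sqnorm0 addr0 bilinear_saddle_gda_step.
Qed.
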